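(* Let $p$ be a prime with $p\equiv 5\pmod 8$, and let $$U(k)=\binom{p-2}{k}_{2,2}+2^{p-1-k}\binom{p-2}{p-1-k}_{2,2}.$$ Then $U\!\left(\frac{p-1}{2}\right)\equiv 0\pmod p$.
   Context: For $n\in\mathbb N$ and $b,c\in\mathbb Z$, the generalized trinomial coefficients $\binom{n}{k}_{b,c}$ ($k\in\mathbb Z$) are the integers defined by $\left(x+b+\frac{c}{x}\right)^n=\sum_{k\in\mathbb Z}\binom{n}{k}_{b,c}x^k$. *)

From mathcomp Require Import all_boot all_algebra.
Set Implicit Arguments. Unset Strict Implicit. Unset Printing Implicit Defensive.
Import GRing.Theory Num.Theory.
Local Open Scope ring_scope.

(* Generalized trinomial coefficient: coefficient of x^k in (x + b + c/x)^n.
   Expanding the product, choosing i factors x, j factors c/x and n-i-j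
   factors b contributes n!/(i! j! (n-i-j)!) b^(n-i-j) c^j x^(i-j),
   and n!/(i! j! (n-i-j)!) = C(n,i) * C(n-i,j). *)
Definition gtrinom (n : nat) (k : int) (b c : int) : int :=
  \sum_(i < n.+1) \sum_(j < n.+1)
     if ((i%:Z - j%:Z == k) && (i + j <= n)%N)
     then ('C(n, i) * 'C(n - i, j))%:R * b ^+ (n - i - j) * c ^+ j
     else 0.

Definition U (p k : nat) : int :=
  gtrinom (p - 2) k%:Z 2 2 + 2 ^+ (p - 1 - k) * gtrinom (p - 2) (p - 1 - k)%N%:Z 2 2.

(* At k = (p-1)/2 the two terms of U(k) involve the same trinomial coefficient,
   so U(k) = (1 + 2^((p-1)/2)) binom(p-2,k)_{2,2}, and it suffices that 2 is a
   quadratic non-residue mod p, i.e. 2^((p-1)/2) = -1 in F_p.  For p = 4h+1 this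
   is Gauss's argument: 2^(2h) (2h)! is the product of the even numbers
   2, 4, ..., 4h, whose upper half 2h+2, ..., 4h is congruent to minus the odd
   numbers 1, 3, ..., 2h-1; hence 2^(2h) (2h)! = (-1)^h (2h)! mod p, and h is odd
   when p = 5 mod 8. *)
From mathcomp Require Import all_boot all_algebra.
From mathcomp Require Import zify.
Import GRing.Theory.

Set Implicit Arguments.
Unset Strict Implicit.
Unset Printing Implicit Defensive.

Lemma fact_double_prod (h : nat) :
  (h.*2)`! = \prod_(i < h) (i.*2.+1 * i.*2.+2).
Proof.
elim: h => [|h IHh]; first by rewrite big_ord0.
by rewrite doubleS !factS IHh big_ord_recr /= mulnCA mulnA mulnC.
Qed.

Lemma expn2_mul_fact (n : nat) : 2 ^ n * n`! = \prod_(i < n) i.+1.*2.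
Proof.
elim: n => [|n IHn]; first by rewrite big_ord0.
by rewrite big_ord_recr /= -IHn expnS factS -!muln2; lia.
Qed.

Local Open Scope ring_scope.

Section GaussLemmaTwo.

Variables (R : comPzRingType) (h : nat).
Hypothesis char_4h1 : (4 * h + 1)%:R = 0 :> R.

Lemma prod_upper_evens :
  \prod_(i < h) ((h + i).+1.*2)%:R = (-1) ^+ h * \prod_(i < h) (i.*2.+1)%:R :> R.
Proof.
rewrite -[h in (-1) ^+ h]card_ord -prodrN (reindex_inj rev_ord_inj) /=.
apply: eq_bigr => i _; apply/eqP; rewrite -subr_eq0 opprK -natrD -char_4h1.
by apply/eqP; congr (_%:R); have := ltn_ord i; lia.
Qed.

Lemma expr2_mul_fact_double :
  2 ^+ h.*2 * (h.*2)`!%:R = (-1) ^+ h * (h.*2)`!%:R :> R.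
Proof.
rewrite -natrX -natrM expn2_mul_fact -addnn big_split_ord natrM !natr_prod /=.
rewrite prod_upper_evens mulrCA addnn fact_double_prod -!natr_prod -natrM -big_split.
by congr (_ * _%:R); apply: eq_bigr => i _; rewrite mulnC.
Qed.

End GaussLemmaTwo.

Lemma Fp_expr2_half (p h : nat) :
  prime p -> p = (4 * h + 1)%N -> 2 ^+ h.*2 = (-1) ^+ h :> 'F_p.
Proof.
move=> p_pr p_eq.
have char_4h1 : (4 * h + 1)%:R = 0 :> 'F_p by rewrite -p_eq pchar_Fp_0.
have fact_neq0 : (h.*2)`!%:R != 0 :> 'F_p.
  rewrite fact_prod natr_prod prodf_seq_neq0; apply/allP => i.
  rewrite mem_index_iota => /andP[i_gt0 i_le].
  by rewrite -(dvdn_pcharf (pchar_Fp p_pr)) gtnNdvd //; lia.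
by apply: (mulIf fact_neq0); apply: expr2_mul_fact_double.
Qed.

Lemma U_middle (p k : nat) :
  (p - 1 - k)%N = k -> U p k = (1 + 2 ^+ k) * gtrinom (p - 2) k 2 2.
Proof. by move=> k_eq; rewrite /U k_eq mulrDl mul1r. Qed.

Local Close Scope ring_scope.

Theorem mainTheorem9 (p : nat) :
  prime p -> p %% 8 = 5 ->
  ((p%:Z) %| U p ((p - 1) %/ 2))%Z.
Proof.
move=> p_pr p_mod8.
have [t p_eq] : exists t, p = 8 * t + 5.
  by exists (p %/ 8); rewrite {1}(divn_eq p 8) p_mod8; lia.
set h := t.*2.+1.
have p_eq_h : p = 4 * h + 1 by rewrite p_eq /h; lia.
have -> : (p - 1) %/ 2 = h.*2 by rewrite p_eq_h; lia.
rewrite U_middle; last by rewrite p_eq_h; lia.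
apply: dvdz_mulr.
have -> : (1 + 2 ^+ h.*2 = (2 ^ h.*2 + 1)%:Z :> int)%R by rewrite -natz natrD natrX addrC.
rewrite dvdzE /= (dvdn_pcharf (pchar_Fp p_pr)) natrD natrX (Fp_expr2_half p_pr p_eq_h).
by rewrite /h -signr_odd /= odd_double addNr.
Qed.
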